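(* Let $F$ be a unit tree and let $!E,G,G'$ be units of $F$ such that $!E$ dominates $G$ in $F$ and $G'$ is the parent of $G$. Then: (a) if $G'$ is a $\wedge$- or $\vee$-unit, then $!E$ dominates $G'$ in $F$; (b) if $G'$ is a $!$-unit, then either $G'=!E$ or $!E$ dominates $G'$ in $F$.
   Context: Formulas are built from atoms by $\neg$ (on atoms only), binary $\wedge,\vee$ and unary $!$ (branching recurrence) and $?$ (branching corecurrence). Fix a formula $\mathbb{F}_0$. Oformulas are occurrences of subformulas of $\mathbb{F}_0$. Politerals are occurrences of literals $P$ or $\neg P$ not in the scope of $\neg$. The modal depth of an oformula is the number of its proper superoccurrences of the form $!E$ or $?E$. A unit is $E[\vec x]$, with $E$ an oformula and $\vec x$ a tuple of infinite bitstrings whose length is the modal depth of $E$. Parenthood: - $G_0[\vec x]$ and $G_1[\vec x]$ are the children of $(G_0\wedge G_1)[\vec x]$ and of $(G_0\vee G_1)[\vec x]$; - the $G[\vec x,y]$, for all infinite bitstrings $y$, are the children of $!G[\vec x]$ and of $?G[\vec x]$. The root is $\mathbb{F}_0[\,]$. ''Subunit'' and ''superunit'' are the reflexive-transitive closures of the child relation and its converse, and ''proper'' means distinct. The $\mathbb{F}_0$-origin $\tilde E$ of $E[\vec x]$ is $E$. $!$-, $?$-, $\wedge$-, $\vee$- and politeral units are those whose origin is of the corresponding form. The smallest common superunit of two units is their common superunit that is a subunit of all their common superunits. $E$ drives $G$ through $H$ iff $H$ is the smallest common superunit of $E,G$ and no proper $?$-superunit of $E$ is a subunit of $H$. A unit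 tree is a nonempty set $S$ of units such that, for each $E\in S$: all superunits of $E$ are in $S$; if $E$ is a $\wedge$- or $\vee$-unit, both children of $E$ are in $S$; and if $E$ is a $!$- or $?$-unit, at least one child of $E$ is in $S$. Runs are sequences of labeled moves $\wp\beta$ with $\wp\in\{\top,\bot\}$. For a run $\Theta$ and a string $\alpha$, $\Theta^{\alpha}$ keeps the labmoves whose move begins with $\alpha$ and deletes that prefix. For an infinite bitstring $y$, $\Theta^{\preceq y}$ keeps the labmoves $\wp\,u.\beta$ with $u$ a finite prefix of $y$ and deletes ''$u.$''. Fix an arbitrary run $\Omega$. Its projection on $\mathbb{F}_0[\,]$ is $\Omega$. If $\Theta$ is the projection on $E[\vec x]$, then the projection on the child $G_i[\vec x]$ of a $\wedge$/$\vee$-unit is $\Theta^{i.}$, and on the child $G[\vec x,y]$ of a $!$/$?$-unit it is $\Theta^{\preceq y}$. Politeral units $L,M$ are opposite iff $\tilde L,\tilde M$ are literals one of which is the negation of the other and, for each $\wp\in\{\top,\bot\}$, the set of $\wp$-labeled moves in the projection of $\Omega$ on $L$ equals the set of $\neg\wp$-labeled moves in the projection on $M$. For a unit tree $F$ and $!E,G\in F$, a $!E$-over-$G$ domination chain in $F$ is a sequence $L_1,M_1,X_1,\dots,L_n,M_n,X_n$ ($n\ge1$) of units such that, writing $L_{n+1}=G$, for each $i\le n$: 1. $L_i,M_i$ are opposite politeral units of $F$; 2. $M_i$ drives $L_{i+1}$ through $X_i$; 3. $M_i$ drives no $L_j$ with $i+2\le j\le n+1$; 4. $M_i$ is not a subunit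 of $!E$; 5. $L_1$ is a subunit of $!E$. $!E$ dominates $G$ in $F$ iff $!E,G\in F$ and either $G$ is a proper subunit of $!E$ or there is a $!E$-over-$G$ domination chain in $F$. *)

From Stdlib Require Export List Arith Ascii Relations.
Export ListNotations.
Set Implicit Arguments.

(* Formulas: atoms are natural numbers; negation only on atoms, so literals
   P and ~P are primitive constructors. *)
Inductive formula : Type :=
| FPos  : nat -> formula
| FNeg  : nat -> formula
| FAnd  : formula -> formula -> formula
| FOr   : formula -> formula -> formula
| FBang : formula -> formula
| FQues : formula -> formula.

(* Occurrences (oformulas) of subformulas of F0 are addressed by paths from the
   root: dL / dR = left / right argument of a binary connective,
   dD = the argument of ! or ?. *)
Inductive dir : Type := dL | dR | dD.

Fixpoint sub (f : formula) (p : list dir) : option formula :=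
  match p with
  | [] => Some f
  | dL :: q => match f with FAnd a _ | FOr a _ => sub a q | _ => None end
  | dR :: q => match f with FAnd _ b | FOr _ b => sub b q | _ => None end
  | dD :: q => match f with FBang a | FQues a => sub a q | _ => None end
  end.

(* modal depth: number of proper superoccurrences of the form !E or ?E,
   i.e. the number of dD steps of the (valid) path *)
Definition mdepth (p : list dir) : nat :=
  length (filter (fun d => match d with dD => true | _ => false end) p).

Definition bitstring := nat -> bool.

(* A unit E[x]: an oformula (path) and a tuple of infinite bitstrings. *)
Record cunit : Type := mkU { upath : list dir; ustr : list bitstring }.

Definition is_unit (F0 : formula) (u : cunit) : Prop :=
  sub F0 (upath u) <> None /\ length (ustr u) = mdepth (upath u).

Definition origin (F0 : formula) (u : cunit) : option formula := sub F0 (upath u).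

Definition is_and  F0 u := exists a b, origin F0 u = Some (FAnd a b).
Definition is_or   F0 u := exists a b, origin F0 u = Some (FOr a b).
Definition is_bang F0 u := exists a, origin F0 u = Some (FBang a).
Definition is_ques F0 u := exists a, origin F0 u = Some (FQues a).
Definition is_politeral F0 u :=
  exists n, origin F0 u = Some (FPos n) \/ origin F0 u = Some (FNeg n).

Definition root : cunit := mkU [] [].

Definition child (F0 : formula) (c u : cunit) : Prop :=
  is_unit F0 u /\
  ( ((is_and F0 u \/ is_or F0 u) /\
      (c = mkU (upath u ++ [dL]) (ustr u) \/ c = mkU (upath u ++ [dR]) (ustr u)))
  \/ ((is_bang F0 u \/ is_ques F0 u) /\
      exists y : bitstring, c = mkU (upath u ++ [dD]) (ustr u ++ [y])) ).

Definition subunit (F0 : formula) (s u : cunit) : Prop :=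
  clos_refl_trans cunit (fun a b => child F0 b a) u s.

Definition proper_subunit (F0 : formula) (s u : cunit) : Prop :=
  subunit F0 s u /\ s <> u.

Definition smallest_common_superunit (F0 : formula) (H E G : cunit) : Prop :=
  subunit F0 E H /\ subunit F0 G H /\
  forall K, subunit F0 E K -> subunit F0 G K -> subunit F0 H K.

Definition drives (F0 : formula) (E G H : cunit) : Prop :=
  smallest_common_superunit F0 H E G /\
  ~ (exists K, proper_subunit F0 E K /\ is_ques F0 K /\ subunit F0 K H).

Definition unit_tree (F0 : formula) (S : cunit -> Prop) : Prop :=
  (exists u, S u) /\
  forall E, S E ->
    is_unit F0 E /\
    (forall K, subunit F0 E K -> S K) /\
    ((is_and F0 E \/ is_or F0 E) -> S (mkU (upath E ++ [dL]) (ustr E)) /\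
                                    S (mkU (upath E ++ [dR]) (ustr E))) /\
    ((is_bang F0 E \/ is_ques F0 E) -> exists C, child F0 C E /\ S C).

(* A run (finite or infinite sequence of labmoves) is represented as a padded
   sequence nat -> option labmove: the run is the sequence of the Some-entries
   in order (None entries are blanks).  Deleting labmoves = replacing them by
   None. *)
Inductive player : Type := Top | Bot.
Definition pneg (w : player) : player := match w with Top => Bot | Bot => Top end.
Definition move := list ascii.
Definition labmove := (player * move)%type.
Definition run := nat -> option labmove.

Fixpoint strip (a m : move) : option move :=
  match a with
  | [] => Some m
  | c :: a' => match m with
               | [] => None
               | d :: m' => if Ascii.eqb c d then strip a' m' else None
               end
  end.

Definition proj_prefix (a : move) (T : run) : run :=
  fun n => match T n with
           | Some (w, m) => match strip a m with Some b => Some (w, b) | None => None end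
           | None => None
           end.

(* strip "u." where u is a finite prefix (from position k on) of y *)
Fixpoint strip_bits (y : bitstring) (k : nat) (m : move) : option move :=
  match m with
  | [] => None
  | c :: m' => if Ascii.eqb c "."%char then Some m'
               else if Ascii.eqb c (if y k then "1"%char else "0"%char)
                    then strip_bits y (S k) m' else None
  end.

Definition proj_branch (y : bitstring) (T : run) : run :=
  fun n => match T n with
           | Some (w, m) => match strip_bits y 0 m with Some b => Some (w, b) | None => None end
           | None => None
           end.

Fixpoint proj_path (T : run) (p : list dir) (xs : list bitstring) : run :=
  match p with
  | [] => T
  | dL :: q => proj_path (proj_prefix ["0"%char; "."%char] T) q xs
  | dR :: q => proj_path (proj_prefix ["1"%char; "."%char] T) q xs
  | dD :: q => match xs with
               | [] => T
               | y :: xs' => proj_path (proj_branch y T) q xs'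
               end
  end.

Definition proj (Om : run) (u : cunit) : run := proj_path Om (upath u) (ustr u).

Definition opposite_literals (a b : option formula) : Prop :=
  exists n, (a = Some (FPos n) /\ b = Some (FNeg n)) \/
            (a = Some (FNeg n) /\ b = Some (FPos n)).

Definition opposite (F0 : formula) (Om : run) (L M : cunit) : Prop :=
  is_politeral F0 L /\ is_politeral F0 M /\
  opposite_literals (origin F0 L) (origin F0 M) /\
  forall (w : player) (b : move),
    (exists n, proj Om L n = Some (w, b)) <-> (exists n, proj Om M n = Some (pneg w, b)).

(* A !E-over-G domination chain L_1,M_1,X_1,...,L_n,M_n,X_n in F
   (indices 1..n; L_{n+1} := G). *)
Definition domination_chain (F0 : formula) (Om : run) (F : cunit -> Prop)
    (BE G : cunit) (n : nat) (L M X : nat -> cunit) : Prop :=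
  let L' := fun j => if Nat.eqb j (S n) then G else L j in
  1 <= n /\
  forall i, 1 <= i <= n ->
    (F (L i) /\ F (M i) /\ opposite F0 Om (L i) (M i)) /\
    drives F0 (M i) (L' (S i)) (X i) /\
    (forall j, i + 2 <= j <= S n -> ~ exists H, drives F0 (M i) (L' j) H) /\
    ~ subunit F0 (M i) BE /\
    subunit F0 (L 1) BE.

Definition dominates (F0 : formula) (Om : run) (F : cunit -> Prop) (BE G : cunit) : Prop :=
  F BE /\ F G /\
  (proper_subunit F0 G BE \/
   exists n L M X, domination_chain F0 Om F BE G n L M X).

(* Parenthood is a function ([parent], obtained by dropping the last
   step of the path), so the superunits of any unit form a chain, enumerated by
   iterating [parent]; two superunits of the same unit at the same depth
   coincide.  From this we get the two facts about "drives" that matter: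
   - if M drives the parent G' of G, then M drives G (through some unit);
   - if M drives G and G' is not a ?-unit, then M drives G' (through some unit).
   A domination chain for G is therefore a domination chain for G': only the
   last driving step changes (second fact), and clause 3, which forbids M_i to
   drive L_{n+1}, survives by the first fact.  If instead G is a proper subunit
   of !E, then G' is a subunit of !E as well, hence either equal to it or a
   proper subunit.  In case (a) G' cannot equal !E, whose origin is a !-formula. *)
From Stdlib Require Import Classical Lia.
Set Implicit Arguments.

(* The parent of a unit: drop the last direction of its path, and the last
   bitstring if that direction enters a ! or ?.  The root is its own parent. *)
Definition parent (u : cunit) : cunit :=
  match rev (upath u) with
  | dD :: r => mkU (rev r) (removelast (ustr u))
  | _ :: r => mkU (rev r) (ustr u)
  | [] => u
  end.

Fixpoint ancestor (k : nat) (u : cunit) : cunit :=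
  match k with 0 => u | S k => parent (ancestor k u) end.

Lemma ancestor_add a b u : ancestor (a + b) u = ancestor a (ancestor b u).
Proof. induction a as [|a IH]; simpl; congruence. Qed.

Lemma parent_depth u : length (upath (parent u)) = length (upath u) - 1.
Proof.
  destruct u as [p s]; unfold parent; simpl.
  assert (Hrev : length p = length (rev p)) by (rewrite length_rev; reflexivity).
  destruct (rev p) as [|d r]; simpl in Hrev |- *; [lia|].
  destruct d; simpl; rewrite length_rev; lia.
Qed.

Lemma ancestor_depth k u : length (upath (ancestor k u)) = length (upath u) - k.
Proof. induction k as [|k IH]; simpl; [lia|]. rewrite parent_depth, IH. lia. Qed.

Lemma ancestor_saturate k u :
  length (upath u) <= k -> ancestor k u = ancestor (length (upath u)) u.
Proof.
  intros Hk. replace k with (k - length (upath u) + length (upath u)) by lia.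
  rewrite ancestor_add. generalize (k - length (upath u)) as j.
  assert (Hroot : upath (ancestor (length (upath u)) u) = []).
  { apply length_zero_iff_nil. rewrite ancestor_depth. lia. }
  induction j as [|j IH]; simpl; [reflexivity|].
  rewrite IH. unfold parent. rewrite Hroot. reflexivity.
Qed.

Lemma child_parent F0 c u : child F0 c u -> parent c = u.
Proof.
  intros [_ [[_ [E|E]] | [_ [y E]]]]; subst c; destruct u as [p s]; unfold parent;
    simpl; rewrite rev_app_distr; simpl; rewrite rev_involutive; try reflexivity.
  rewrite removelast_last. reflexivity.
Qed.

Lemma child_depth F0 c u : child F0 c u -> length (upath c) = S (length (upath u)).
Proof.
  intros [_ [[_ [E|E]] | [_ [y E]]]]; subst c; simpl; rewrite length_app; simpl; lia.
Qed.

Lemma superunit_ancestor F0 s u : subunit F0 s u -> exists k, u = ancestor k s.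
Proof.
  induction 1 as [x y Hc | x | x y z _ [k1 E1] _ [k2 E2]].
  - exists 1. simpl. symmetry. exact (child_parent Hc).
  - exists 0. reflexivity.
  - exists (k1 + k2). rewrite ancestor_add. congruence.
Qed.

Lemma superunits_same_depth F0 s u v :
  subunit F0 s u -> subunit F0 s v -> length (upath u) = length (upath v) -> u = v.
Proof.
  intros Hu Hv Hdepth.
  destruct (superunit_ancestor Hu) as [a ->], (superunit_ancestor Hv) as [b ->].
  rewrite !ancestor_depth in Hdepth.
  assert (Hab : a = b \/ (length (upath s) <= a /\ length (upath s) <= b)) by lia.
  destruct Hab as [-> | [Ha Hb]]; [reflexivity|].
  rewrite (ancestor_saturate _ Ha), (ancestor_saturate _ Hb). reflexivity.
Qed.

Lemma subunit_refl F0 u : subunit F0 u u.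
Proof. apply rt_refl. Qed.

Lemma subunit_trans F0 a b c : subunit F0 a b -> subunit F0 b c -> subunit F0 a c.
Proof. intros Hab Hbc. exact (rt_trans _ _ c b a Hbc Hab). Qed.

Lemma subunit_child F0 c u : child F0 c u -> subunit F0 c u.
Proof. intros Hc. apply rt_step. exact Hc. Qed.

Lemma superunit_of_child F0 c u v :
  child F0 c u -> subunit F0 c v -> c = v \/ subunit F0 u v.
Proof.
  intros Hc Hcv. apply clos_rt_rtn1 in Hcv.
  destruct Hcv as [|y z Hyz Hr]; [left; reflexivity|].
  right. rewrite <- (child_parent Hc), (child_parent Hyz). apply clos_rtn1_rt, Hr.
Qed.

Lemma subunit_below_child F0 s u :
  subunit F0 s u -> s = u \/ exists c, child F0 c u /\ subunit F0 s c.
Proof.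
  intros Hs. apply clos_rt_rt1n in Hs.
  destruct Hs as [|y z Hyz Hr]; [left; reflexivity|].
  right. exists y. split; [exact Hyz | apply clos_rt1n_rt, Hr].
Qed.

Lemma children_above_same_unit F0 s c1 c2 u :
  child F0 c1 u -> child F0 c2 u -> subunit F0 s c1 -> subunit F0 s c2 -> c1 = c2.
Proof.
  intros H1 H2 Hs1 Hs2. apply (superunits_same_depth Hs1 Hs2).
  rewrite (child_depth H1), (child_depth H2). reflexivity.
Qed.

(* If M drives the parent of G, then M drives G: through G itself when G is a
   superunit of M, and through the same unit otherwise. *)
Lemma drives_from_parent F0 M G G' H :
  child F0 G G' -> drives F0 M G' H -> exists H', drives F0 M G H'.
Proof.
  intros Hc [[HMH [HG'H Hleast]] Hnoques].
  assert (HGH : subunit F0 G H) by exact (subunit_trans (subunit_child Hc) HG'H).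
  destruct (classic (subunit F0 M G)) as [HMG | HMG].
  - exists G. split.
    + split; [exact HMG | split; [apply subunit_refl | auto]].
    + intros [K [HMK [HqK HKG]]]. apply Hnoques.
      exists K. repeat split; try apply HMK; auto. exact (subunit_trans HKG HGH).
  - exists H. split; [|exact Hnoques]. repeat split; auto.
    intros K HMK HGK. apply Hleast; [exact HMK|].
    destruct (superunit_of_child Hc HGK) as [<- | HG'K]; [contradiction | exact HG'K].
Qed.

(* If M drives G and the parent G' of G is not a ?-unit, then M drives G':
   through G' when M drives G through G itself, and through the same unit
   otherwise.  In the first case a proper ?-superunit of M below G' would lie
   below a child of G' above M, i.e. below G, which is excluded. *)
Lemma drives_to_parent F0 M G G' X :
  child F0 G G' -> ~ is_ques F0 G' -> drives F0 M G X -> exists H, drives F0 M G' H.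
Proof.
  intros Hc Hq [[HMX [HGX Hleast]] Hnoques].
  destruct (classic (X = G)) as [-> | HXG].
  - exists G'. split.
    + split; [exact (subunit_trans HMX (subunit_child Hc)) |].
      split; [apply subunit_refl | auto].
    + intros [K [[HMK HMneK] [HqK HKG']]].
      destruct (subunit_below_child HKG') as [-> | [c [Hc' HKc]]]; [contradiction|].
      assert (c = G) as ->
        by exact (children_above_same_unit Hc' Hc (subunit_trans HMK HKc) HMX).
      apply Hnoques. exists K. repeat split; auto.
  - exists X. split; [|exact Hnoques]. split; [exact HMX | split].
    + destruct (superunit_of_child Hc HGX) as [E | HG'X]; [congruence | exact HG'X].
    + intros K HMK HG'K. exact (Hleast K HMK (subunit_trans (subunit_child Hc) HG'K)).
Qed.

(* A domination chain over G is one over its parent G' (G' not a ?-unit): the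
   units L_i, M_i are kept and only the last driving unit X_n is replaced. *)
Lemma chain_to_parent F0 Om F BE G G' n L M X :
  child F0 G G' -> ~ is_ques F0 G' ->
  domination_chain F0 Om F BE G n L M X ->
  exists X', domination_chain F0 Om F BE G' n L M X'.
Proof.
  intros Hc Hq [Hn Hlinks]. cbv beta zeta in Hlinks.
  destruct (Hlinks n (conj Hn (le_n n))) as [_ [Hlast _]].
  rewrite Nat.eqb_refl in Hlast.
  destruct (drives_to_parent Hc Hq Hlast) as [Xn HXn].
  exists (fun k => if Nat.eqb k n then Xn else X k).
  split; [exact Hn|]. cbv beta zeta. intros i Hi.
  destruct (Hlinks i Hi) as [Hopp [Hdrive [Hnodrive Hrest]]].
  split; [exact Hopp|]. split; [|split; [|exact Hrest]].
  - destruct (Nat.eqb_spec i n) as [-> | Hin].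
    + rewrite !Nat.eqb_refl. exact HXn.
    + assert (Hf : Nat.eqb (S i) (S n) = false) by (apply Nat.eqb_neq; lia).
      rewrite Hf in Hdrive |- *. exact Hdrive.
  - intros j Hj [H HD]. apply (Hnodrive j Hj).
    destruct (Nat.eqb_spec j (S n)) as [-> | _].
    + exact (drives_from_parent Hc HD).
    + exists H. exact HD.
Qed.

Lemma dominates_parent F0 Om F BE G G' :
  F BE -> F G' -> ~ is_ques F0 G' ->
  dominates F0 Om F BE G -> child F0 G G' -> G' = BE \/ dominates F0 Om F BE G'.
Proof.
  intros HFBE HFG' Hq [_ [_ Hdom]] Hc.
  destruct Hdom as [[HGBE HGneBE] | [n [L [M [X Hchain]]]]].
  - destruct (superunit_of_child Hc HGBE) as [E | HG'BE]; [contradiction|].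
    destruct (classic (G' = BE)) as [E | HG'neBE]; [left; exact E|].
    right. split; [exact HFBE | split; [exact HFG' | left; split; assumption]].
  - right. split; [exact HFBE | split; [exact HFG' | right]].
    destruct (chain_to_parent Hc Hq Hchain) as [X' HX']. exists n, L, M, X'. exact HX'.
Qed.

Theorem lemma8p5 (F0 : formula) (Om : run) (F : cunit -> Prop) (BE G G' : cunit) :
  unit_tree F0 F ->
  is_bang F0 BE ->
  F BE -> F G -> F G' ->
  dominates F0 Om F BE G ->
  child F0 G G' ->
  ((is_and F0 G' \/ is_or F0 G') -> dominates F0 Om F BE G') /\
  (is_bang F0 G' -> G' = BE \/ dominates F0 Om F BE G').
Proof.
  intros _ [e HBE] HFBE _ HFG' Hdom Hc.
  pose proof (fun Hq => dominates_parent HFBE HFG' Hq Hdom Hc) as Hstep.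
  split.
  - intros Hwedge_vee.
    assert (Hcases : exists a b, origin F0 G' = Some (FAnd a b) \/
                                 origin F0 G' = Some (FOr a b))
      by (destruct Hwedge_vee as [[a [b E]] | [a [b E]]]; exists a, b; auto).
    destruct Hcases as [a [b HG']].
    destruct Hstep as [-> | Hdom']; [intros [q Hq]; intuition congruence | | exact Hdom'].
    intuition congruence.
  - intros [a HG']. apply Hstep. intros [q Hq]. congruence.
Qed.
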